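(* Let $r\ge1$, $a,b,q$ be nonnegative integers and $p$ a real number with $0\le p\le b$, $0\le q\le a$, $a-q=r(b-p)$, and $a$ and $b$ not both zero. Let $P\subset\mathbb{R}^2$ be the closed (possibly degenerate) pentagon with vertices $(0,0),(0,a),(p,a),(b,q),(b,0)$. Call a sequence $(c_1,\dots,c_a)$ of nonnegative integers a parking function in $P$ if its nondecreasing rearrangement $s_1\le s_2\le\cdots\le s_a$ is the left-area sequence of some lattice path from $(0,a)$ to $(b,0)$ with unit steps $(0,-1)$ and $(1,0)$ contained in $P$, where the left-area sequence of such a path is $(s_1,\dots,s_a)$ with $s_i$ the $x$-coordinate of the down step going from height $a-i+1$ to height $a-i$. Define $G(a,b,p,r,q)$ recursively by $$G(a,b,p,r,q)=\begin{cases}(b+1)^a & \text{if } p=b \ (\text{equivalently } q=a,\ P\text{ a rectangle or segment}),\\[4pt] \displaystyle\sum_{w=0}^{q} b^{a-q+w}\binom{a}{q-w} & \text{else if } a-q\le r,\\[4pt] \displaystyle\sum_{w=0}^{q}(\lfloor p\rfloor+1)^{a-w}(b-\lfloor p\rfloor)^{w}\binom{a}{w}+\sum_{t=q+1}^{q+(b-\lfloor p\rfloor-1)r}(\lfloor p\rfloor+1)^{a-t}\binom{a}{t}\,G(\xi_t) & \text{otherwise,}\end{cases}$$ where $\xi_t=\big(t,\ b-\lfloor p\rfloor-1,\ b-\lfloor p\rfloor-\tfrac{t-q}{r}-1,\ r,\ q\big)$. Then the number of parking functions in $P$ equals $G(a,b,p,r,q)$.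
   Context: The pentagon $P$ has a slanted side from $(p,a)$ to $(b,q)$ along which the height drops by $r$ for each unit of horizontal displacement; $\lfloor p\rfloor$ denotes the integer part of $p$. *)

From Stdlib Require Import Reals ZArith.
From mathcomp Require Import all_boot.

Set Implicit Arguments.
Unset Strict Implicit.
Unset Printing Implicit Defensive.

(* integer part of a (nonnegative) real: Int_part x = up x - 1 = floor x *)
Definition fl (p : R) : nat := Z.to_nat (Int_part p).

(* The closed pentagon P with vertices (0,0),(0,a),(p,a),(b,q),(b,0),
   the slanted side having slope -r:
   P = { (x,y) | 0 <= x <= b, 0 <= y <= a, y <= a - r (x - p) }.
   (Nonnegativity is automatic for lattice points with nat coordinates.) *)
Definition in_P (a b : nat) (p : R) (r : nat) (x y : nat) : Prop :=
  Rle (INR x) (INR b) /\ Rle (INR y) (INR a) /\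
  Rle (INR y) (Rminus (INR a) (Rmult (INR r) (Rminus (INR x) p))).

(* A lattice path from (0,a) to (b,0) is a word of steps:
   true = down step (0,-1), false = right step (1,0). *)
Definition is_path (a b : nat) (s : seq bool) : Prop :=
  count id s = a /\ count negb s = b.

Definition path_pt (a : nat) (s : seq bool) (k : nat) : nat * nat :=
  (count negb (take k s), a - count id (take k s)).

(* the path is contained in P: every lattice point visited lies in P
   (equivalent to containment of the whole polygonal path, P being convex) *)
Definition path_in_P (a b : nat) (p : R) (r : nat) (s : seq bool) : Prop :=
  is_path a b s /\
  forall k, (k <= size s)%N -> in_P a b p r (path_pt a s k).1 (path_pt a s k).2.

Fixpoint left_area_from (x : nat) (s : seq bool) : seq nat :=
  match s with
  | [::] => [::]
  | true :: s' => x :: left_area_from x s'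
  | false :: s' => left_area_from x.+1 s'
  end.

Definition left_area (s : seq bool) : seq nat := left_area_from 0 s.

Definition parking_in_P (a b : nat) (p : R) (r : nat) (c : seq nat) : Prop :=
  size c = a /\
  exists s : seq bool, path_in_P a b p r s /\ sort leq c = left_area s.

(* G(a,b,p,r,q), defined by recursion on b (fuel argument, which is always
   large enough when started at b.+1, since the recursive calls have
   b' = b - floor p - 1 < b) *)
Fixpoint G_fuel (n : nat) (a b : nat) (p : R) (r q : nat) : nat :=
  match n with
  | 0 => 0
  | n'.+1 =>
    if Req_EM_T p (INR b) then (b + 1) ^ a
    else if (a - q <= r)%N then
      \sum_(0 <= w < q.+1) b ^ (a - q + w) * 'C(a, q - w)
    else
      let f := fl p in
      \sum_(0 <= w < q.+1) (f + 1) ^ (a - w) * (b - f) ^ w * 'C(a, w)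
      + \sum_(q.+1 <= t < (q + (b - f - 1) * r).+1)
          (f + 1) ^ (a - t) * 'C(a, t) *
          G_fuel n' t (b - f - 1)
                 (Rminus (INR (b - f - 1)) (Rdiv (INR (t - q)) (INR r))) r q
  end.

Definition G (a b : nat) (p : R) (r q : nat) : nat := G_fuel b.+1 a b p r q.

(* A word c in {0..b}^a is a parking function in P iff
   #{i | c_i < x} >= r (x - p) for every column x <= b: the path with
   left-area sequence sort c meets column x at height a - #{i | c_i < x},
   and P allows at most a - r (x - p) there.  Columns x <= floor p impose
   nothing, so with m = floor p + 1 the entries of c below m are free
   (m choices each), while the entries >= m, shifted down by m, form a word
   of some length t in {0..b-m}^t satisfying the same condition for the
   pentagon (t, b-m, b-m-(t-q)/r, r, q).  That condition holds for every
   word when t <= q and for none when t > q + (b-m) r; summing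
   C(a,t) m^(a-t) times these counts over t is the recursion defining G. *)

From Stdlib Require Import Reals ZArith Lra Lia.
From mathcomp Require Import all_boot zify.

Set Implicit Arguments.
Unset Strict Implicit.
Unset Printing Implicit Defensive.

(* [%R] is taken by MathComp's ring_scope. *)
Delimit Scope R_scope with Re.

Fixpoint bounded_seqs (n b : nat) : seq (seq nat) :=
  if n is n'.+1 then [seq x :: s | x <- iota 0 b.+1, s <- bounded_seqs n' b]
  else [:: [::]].

Arguments bounded_seqs : simpl never.

Lemma bounded_seqsS n b :
  bounded_seqs n.+1 b = [seq x :: s | x <- iota 0 b.+1, s <- bounded_seqs n b].
Proof. by []. Qed.

Lemma mem_bounded_seqs n b c :
  (c \in bounded_seqs n b) = (size c == n) && all (leq^~ b) c.
Proof.
elim: n c => [|n IHn] [|y c] //.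
  by rewrite bounded_seqsS; apply/allpairsP => -[[x s] [_ _]].
rewrite bounded_seqsS; apply/allpairsP/idP.
- move=> [[x s] [+ + [-> ->]]]; rewrite mem_iota IHn ltnS.
  by rewrite /= eqSS => -> /andP[-> ->].
- move=> /andP[/eqP[csize] /andP[yb cb]].
  by exists (y, c); rewrite mem_iota IHn ltnS yb csize eqxx.
Qed.

Lemma bounded_seqs_uniq n b : uniq (bounded_seqs n b).
Proof.
elim: n => // n IHn; apply: allpairs_uniq => //; first exact: iota_uniq.
by move=> [x s] [y t] _ _ /= [-> ->].
Qed.

Lemma size_bounded_seqs n b : size (bounded_seqs n b) = b.+1 ^ n.
Proof. by elim: n => // n IHn; rewrite bounded_seqsS size_allpairs size_iota IHn expnS. Qed.

Lemma count_bounded_seqsS (P : pred (seq nat)) n b :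
  count P (bounded_seqs n.+1 b) =
  \sum_(x <- iota 0 b.+1) count (fun s => P (x :: s)) (bounded_seqs n b).
Proof.
rewrite bounded_seqsS; elim: (iota 0 b.+1) => [|x xs IH]; first by rewrite big_nil.
by rewrite allpairs_cons count_cat IH big_cons count_map.
Qed.

Definition shift_above (m : nat) (c : seq nat) : seq nat :=
  [seq y - m | y <- c & m <= y].

(* Induction on n, splitting on the first entry: below m it is dropped by
   [shift_above m] (m choices), otherwise it becomes the first entry of the
   shifted word; Pascal's rule recombines the two sums. *)
Lemma count_shift_above (Q : pred (seq nat)) m b n :
  count (Q \o shift_above m) (bounded_seqs n (m + b)) =
  \sum_(t < n.+1) 'C(n, t) * m ^ (n - t) * count Q (bounded_seqs t b).
Proof.
elim: n Q => [|n IHn] Q; first by rewrite big_ord1 /= bin0 expn0 !mul1n.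
rewrite count_bounded_seqsS -addnS iotaD big_cat /= add0n.
have low : \sum_(x <- iota 0 m) count (fun s => (Q \o shift_above m) (x :: s))
             (bounded_seqs n (m + b)) =
           m * \sum_(t < n.+1) 'C(n, t) * m ^ (n - t) * count Q (bounded_seqs t b).
  rewrite -IHn -[in RHS](subn0 m) -sum_nat_const_nat /index_iota subn0.
  apply: eq_big_seq => x; rewrite mem_iota add0n => /andP[_ xm].
  by apply: eq_count => s; rewrite /= /shift_above /= leqNgt xm.
have high : \sum_(x <- iota m b.+1) count (fun s => (Q \o shift_above m) (x :: s))
              (bounded_seqs n (m + b)) =
            \sum_(t < n.+1) 'C(n, t) * m ^ (n - t) * count Q (bounded_seqs t.+1 b).
  rewrite -[m in iota m _]addn0 iotaDl big_map.
  under eq_bigr => y _.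
    rewrite (eq_count (a2 := (fun d => Q (y :: d)) \o shift_above m)); last first.
      by move=> s; rewrite /= /shift_above /= leq_addr /= addKn.
    rewrite IHn.
  over.
  rewrite exchange_big /=; apply: eq_bigr => t _.
  by rewrite -big_distrr /= count_bounded_seqsS.
rewrite low high big_ord_recl [in RHS]big_ord_recl /= !bin0 !subn0 !mul1n.
under [in RHS]eq_bigr => i _ do rewrite /bump /= add1n binS !mulnDl subSS.
rewrite big_split /= mulnDr mulnA -expnS addnA; congr (_ + _).
rewrite [in RHS]big_ord_recr /= bin_small // !mul0n !addn0 big_distrr /=.
congr (_ + _); apply: eq_bigr => i _; rewrite /bump /= add1n.
have -> : n - i = (n - i.+1).+1 by have := ltn_ord i; lia.
by rewrite expnS !mulnA [m * _]mulnC.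
Qed.

Lemma INR_leq m n : m <= n -> (INR m <= INR n)%Re.
Proof. by move/leP; apply: le_INR. Qed.

Lemma INR_subn m n : n <= m -> INR (m - n) = (INR m - INR n)%Re.
Proof. by move/leP; apply: minus_INR. Qed.

Definition count_below (x : nat) (c : seq nat) : nat := count (fun y => y < x) c.

Definition parkingb (b : nat) (p : R) (r : nat) (c : seq nat) : bool :=
  all (fun x => Rle_dec (INR r * (INR x - p)) (INR (count_below x c))) (iota 0 b.+1).

Lemma parkingbP b p r c :
  reflect (forall x, x <= b -> (INR r * (INR x - p) <= INR (count_below x c))%Re)
          (parkingb b p r c).
Proof.
apply: (iffP allP) => [H x xb|H x].
  by apply/sumboolP/H; rewrite mem_iota ltnS.
by rewrite mem_iota ltnS => /H /sumboolP.
Qed.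

Lemma parkingb_above b p r c : (INR b <= p)%Re -> parkingb b p r c.
Proof.
move=> bp; apply/parkingbP => x /INR_leq xb.
by have := pos_INR r; have := pos_INR (count_below x c); nra.
Qed.

Lemma parkingb_neg b p r c : 0 < r -> (p < 0)%Re -> ~~ parkingb b p r c.
Proof.
move=> /ltP/lt_0_INR r_gt0 p_lt0; apply/parkingbP => /(_ 0 isT).
rewrite /count_below (eq_count (a2 := pred0)) ?count_pred0 //=; nra.
Qed.

Lemma count_below_shift_above m x c :
  count_below (m + x) c = count_below m c + count_below x (shift_above m c).
Proof.
rewrite /count_below /shift_above count_map count_filter.
elim: c => //= y c ->; case: (leqP m y) => ym /=; lia.
Qed.

Lemma size_shift_above m c : size c = count_below m c + size (shift_above m c).
Proof.
rewrite /count_below /shift_above size_map size_filter.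
by elim: c => //= y c ->; case: (leqP m y) => ym /=; lia.
Qed.

Lemma parkingb_shift_above n m b p r c :
  0 < r -> (INR m - 1 <= p)%Re -> size c = n ->
  parkingb (m + b) p r c =
  parkingb b (p - INR m + (INR n - INR (size (shift_above m c))) / INR r) r
           (shift_above m c).
Proof.
move=> /ltP/lt_0_INR r_gt0 mp size_c.
set d := shift_above m c.
have split_n : n = (count_below m c + size d)%N by rewrite -size_c (size_shift_above m).
have slope x : (INR r * (INR (m + x) - p) - INR (count_below m c) =
                INR r * (INR x - (p - INR m + (INR n - INR (size d)) / INR r)))%Re.
  by rewrite split_n !plus_INR; field; lra.
apply/parkingbP/parkingbP => H x xb.
  have := H (m + x) ltac:(lia); have := slope x.
  by rewrite count_below_shift_above -/d !plus_INR; lra.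
have [mx|xm] := leqP m x.
  have := H (x - m) ltac:(lia); have := slope (x - m).
  by rewrite -(subnKC mx) count_below_shift_above -/d !plus_INR addKn; lra.
have := pos_INR r; have := pos_INR (count_below x c).
have : (INR x <= INR m - 1)%Re by have := INR_leq xm; rewrite S_INR; lra.
nra.
Qed.

Lemma left_area_from_ge x s : all (leq x) (left_area_from x s).
Proof.
elim: s x => [|[] s IHs] x //=; first by rewrite leqnn IHs.
by apply: sub_all (IHs x.+1) => y /ltnW.
Qed.

Lemma left_area_from_le x s : all (leq^~ (x + count negb s)) (left_area_from x s).
Proof.
elim: s x => [|[] s IHs] x //=; first by rewrite leq_addr IHs.
by apply: sub_all (IHs x.+1) => y /=; lia.
Qed.

Lemma count_below_left_area_from x s : count_below x (left_area_from x s) = 0.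
Proof.
apply/eqP; rewrite -leqn0 leqNgt -has_count; apply/hasPn => y /(allP (left_area_from_ge x s)).
by rewrite -leqNgt.
Qed.

Lemma count_below_left_area_from_take x s k :
  count_below (x + count negb (take k s)) (left_area_from x s) <= count id (take k s).
Proof.
elim: s x k => [|[] s IHs] x [|k]; rewrite ?take0 ?addn0 ?count_below_left_area_from //.
  by rewrite /count_below /= !add0n leq_add ?leq_b1 ?IHs.
by have := IHs x.+1 k; rewrite /= addSnnS.
Qed.

Lemma count_below_left_area_from_exists x s z : z <= count negb s ->
  exists2 k, k <= size s &
    count negb (take k s) = z /\
    count_below (x + z) (left_area_from x s) = count id (take k s).
Proof.
elim: s x z => [|d s IHs] x [|z] z_le.
- by exists 0; rewrite // addn0 count_below_left_area_from.
- by [].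
- by exists 0; rewrite // take0 addn0 count_below_left_area_from.
case: d z_le => /= z_le.
  have [k k_le [right_k below_k]] := IHs x z.+1 z_le.
  exists k.+1; rewrite //= right_k; split=> //.
  move: below_k; rewrite /count_below /= => ->.
  by rewrite addnS ltnS leq_addr.
have [k k_le [right_k below_k]] := IHs x.+1 z ltac:(lia).
by exists k.+1; rewrite //= right_k add1n add0n -below_k addSnnS.
Qed.

Fixpoint path_of_area (b x : nat) (l : seq nat) : seq bool :=
  if l is y :: l' then nseq (y - x) false ++ true :: path_of_area b y l'
  else nseq (b - x) false.

Lemma left_area_from_nseq x n s :
  left_area_from x (nseq n false ++ s) = left_area_from (x + n) s.
Proof. by elim: n x => [|n IHn] x /=; rewrite ?addn0 // IHn addSnnS. Qed.

Lemma left_area_from_path_of_area b x l :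
  sorted leq l -> all (leq x) l -> left_area_from x (path_of_area b x l) = l.
Proof.
elim: l x => [|y l IHl] x /=; first by rewrite -[nseq _ _]cats0 left_area_from_nseq.
move=> l_sorted /andP[xy l_ge]; rewrite left_area_from_nseq subnKC //= IHl //.
  exact: path_sorted l_sorted.
exact: order_path_min leq_trans l_sorted.
Qed.

Lemma count_down_path_of_area b x l : count id (path_of_area b x l) = size l.
Proof.
elim: l x => [|y l IHl] x /=; first by rewrite count_nseq mul0n.
by rewrite count_cat count_nseq mul0n /= IHl.
Qed.

Lemma count_right_path_of_area b x l :
  sorted leq l -> all (leq x) l -> all (leq^~ b) l -> x <= b ->
  count negb (path_of_area b x l) = b - x.
Proof.
elim: l x => [|y l IHl] x /=; first by rewrite count_nseq mul1n.
move=> l_sorted /andP[xy l_ge] /andP[yb l_le] xb.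
rewrite count_cat count_nseq mul1n /= IHl //; first lia.
  exact: path_sorted l_sorted.
exact: order_path_min leq_trans l_sorted.
Qed.

Lemma count_take_le T (P : pred T) k s : count P (take k s) <= count P s.
Proof. by rewrite -{2}(cat_take_drop k s) count_cat leq_addr. Qed.

Lemma in_P_path_pt a b p r x d : d <= a ->
  in_P a b p r x (a - d) <-> x <= b /\ (INR r * (INR x - p) <= INR d)%Re.
Proof.
move=> da; rewrite /in_P INR_subn //; have := pos_INR d.
split=> [[/INR_le/leP xb [_ slope]]|[/INR_leq xb slope]]; split=> //; lra.
Qed.

Lemma parkingb_sort b p r c : parkingb b p r (sort leq c) = parkingb b p r c.
Proof. by apply: eq_all => x; rewrite /count_below count_sort. Qed.

Lemma left_area_parkingb a b p r s : path_in_P a b p r s ->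
  all (leq^~ b) (left_area s) && parkingb b p r (left_area s).
Proof.
move=> [[down right] s_in_P]; apply/andP; split.
  by have := left_area_from_le 0 s; rewrite add0n right.
apply/parkingbP => x xb.
have [|k k_le [right_k below_k]] := count_below_left_area_from_exists 0 (s := s) (z := x).
  by rewrite right.
have := s_in_P k k_le; rewrite /path_pt /= right_k in_P_path_pt; last first.
  by rewrite -down count_take_le.
by rewrite /left_area -below_k => -[].
Qed.

Lemma path_in_P_path_of_area a b p r l :
  sorted leq l -> size l = a -> all (leq^~ b) l -> parkingb b p r l ->
  path_in_P a b p r (path_of_area b 0 l).
Proof.
move=> l_sorted size_l l_le /parkingbP l_park; set s := path_of_area b 0 l.
have l_ge0 : all (leq 0) l by apply/allP.
have down : count id s = a by rewrite count_down_path_of_area.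
have right : count negb s = b by rewrite count_right_path_of_area ?subn0.
split=> // k _; rewrite /path_pt /= in_P_path_pt; last by rewrite -down count_take_le.
have right_k : count negb (take k s) <= b by rewrite -right count_take_le.
split=> //; apply: Rle_trans (l_park _ right_k) _; apply: INR_leq.
by have := count_below_left_area_from_take 0 s k; rewrite add0n left_area_from_path_of_area.
Qed.

Lemma parking_in_PE a b p r c :
  parking_in_P a b p r c <-> c \in [seq c <- bounded_seqs a b | parkingb b p r c].
Proof.
rewrite mem_filter mem_bounded_seqs -parkingb_sort -(all_sort _ leq).
split=> [[-> [s [s_in_P ->]]]|/and3P[c_park /eqP size_c c_le]].
  by rewrite eqxx andbC /= (left_area_parkingb s_in_P).
split=> //; exists (path_of_area b 0 (sort leq c)).
have c_sorted := sort_sorted leq_total c.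
split; first by apply: path_in_P_path_of_area; rewrite ?size_sort.
by rewrite /left_area left_area_from_path_of_area //; apply/allP.
Qed.

Lemma count_parkingb_above n b p r :
  (INR b <= p)%Re -> count (parkingb b p r) (bounded_seqs n b) = b.+1 ^ n.
Proof.
move=> bp; rewrite -size_bounded_seqs -count_predT.
by apply: eq_count => c; apply: parkingb_above.
Qed.

Lemma count_parkingb_neg n b p r :
  0 < r -> (p < 0)%Re -> count (parkingb b p r) (bounded_seqs n b) = 0.
Proof.
move=> r_gt0 p_lt0; rewrite (eq_count (a2 := pred0)) ?count_pred0 // => c.
exact/negbTE/parkingb_neg.
Qed.

Lemma count_parkingb_shift n m b p r :
  0 < r -> (INR m - 1 <= p)%Re ->
  count (parkingb (m + b) p r) (bounded_seqs n (m + b)) =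
  \sum_(0 <= t < n.+1) 'C(n, t) * m ^ (n - t) *
    count (parkingb b (p - INR m + (INR n - INR t) / INR r) r) (bounded_seqs t b).
Proof.
move=> r_gt0 mp.
pose Q d := parkingb b (p - INR m + (INR n - INR (size d)) / INR r) r d.
rewrite (eq_in_count (a2 := Q \o shift_above m)) => [|c]; last first.
  by rewrite mem_bounded_seqs => /andP[/eqP size_c _]; apply: parkingb_shift_above.
rewrite count_shift_above big_mkord; apply: eq_bigr => t _; congr (_ * _).
by apply: eq_in_count => d; rewrite mem_bounded_seqs => /andP[/eqP <- _].
Qed.

Lemma count_parkingb_split n m b q p r :
  0 < r -> (INR m - 1 <= p < INR m)%Re -> q <= n ->
  (INR n - INR q = INR r * (INR (m + b) - p))%Re ->
  count (parkingb (m + b) p r) (bounded_seqs n (m + b)) =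
  \sum_(0 <= t < q.+1) 'C(n, t) * m ^ (n - t) * b.+1 ^ t +
  \sum_(q.+1 <= t < (q + b * r).+1) 'C(n, t) * m ^ (n - t) *
    count (parkingb b (INR b - INR (t - q) / INR r) r) (bounded_seqs t b).
Proof.
move=> r_gt0 [mp pm] qn slope; have rR : (1 <= INR r)%Re by apply: INR_leq r_gt0.
rewrite plus_INR in slope.
have divK u : (u / INR r * INR r = u)%Re by field; lra.
have shifted t :
    (p - INR m + (INR n - INR t) / INR r = INR b - (INR t - INR q) / INR r)%Re.
  by field_simplify_eq; lra.
have qbr_n : q + b * r <= n.
  by apply/leP/INR_le; rewrite plus_INR mult_INR; nra.
rewrite count_parkingb_shift // (big_cat_nat _ (n := q.+1)) ?ltnS //=.
rewrite (big_cat_nat _ (m := q.+1) (n := (q + b * r).+1)) /= ?ltnS ?leq_addr //.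
rewrite [X in _ + (_ + X)]big1_seq ?addn0 => [|t /andP[_]]; last first.
  rewrite mem_index_iota shifted => /andP[qbr_t _].
  rewrite count_parkingb_neg ?muln0 //; have := divK (INR t - INR q)%Re.
  by have := INR_leq qbr_t; rewrite S_INR plus_INR mult_INR; nra.
congr (_ + _); apply: eq_big_nat => t /andP[t_lo t_hi]; rewrite shifted.
  rewrite count_parkingb_above //; have := divK (INR t - INR q)%Re.
  by have := INR_leq (t_hi : t <= q); nra.
by rewrite INR_subn ?(ltnW t_lo).
Qed.

Lemma INR_fl_bounds p : (0 <= p)%Re -> (INR (fl p) <= p < INR (fl p) + 1)%Re.
Proof.
move=> p_ge0; have [lb ub] := base_Int_part p.
have : (-1 < IZR (Int_part p))%Re by lra.
move/(lt_IZR (-1)) => ?.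
by rewrite /fl INR_IZR_INZ Z2Nat.id; [lra | lia].
Qed.

Lemma count_parkingb_G fuel n b q p r :
  0 < r -> b < fuel -> (0 <= p <= INR b)%Re -> q <= n ->
  (INR n - INR q = INR r * (INR b - p))%Re ->
  count (parkingb b p r) (bounded_seqs n b) = G_fuel fuel n b p r q.
Proof.
move=> r_gt0; elim: fuel n b q p => // fuel IH n b q p b_lt [p_ge0 pb] qn slope.
have rR : (1 <= INR r)%Re by apply: INR_leq r_gt0.
rewrite /=; case: Req_EM_T => [p_eq_b|p_neq_b] /=.
  by rewrite addn1 count_parkingb_above // p_eq_b; apply: Rle_refl.
have {pb p_neq_b} p_lt_b : (p < INR b)%Re by lra.
have [fl_le fl_gt] := INR_fl_bounds p_ge0.
have f_lt_b : fl p < b by apply/ltP/INR_lt; lra.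
case: ifP => [small_drop|_].
  (* a - q <= r forces p >= b - 1: split at m = b and reindex by w = q - t. *)
  have b_gt0 : 0 < b by case: (b) f_lt_b.
  have bp : (INR b - 1 <= p)%Re by have := INR_leq small_drop; rewrite INR_subn //; nra.
  rewrite -[b in LHS]addn0 (count_parkingb_split (q := q)) ?addn0 //.
  rewrite (big_geq (m := q.+1)) // addn0 big_nat_rev; apply: eq_big_nat => t /andP[_ tq].
  by rewrite exp1n muln1 mulnC add0n subSS; congr (_ ^ _ * _); lia.
have b_split : b = fl p + 1 + (b - fl p - 1) by lia.
have m_bounds : (INR (fl p + 1) - 1 <= p < INR (fl p + 1))%Re by rewrite plus_INR /=; lra.
rewrite [in LHS]b_split (count_parkingb_split (q := q)) -?b_split //.
congr (_ + _); apply: eq_big_nat => t /andP[t_lo t_hi].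
  by rewrite -mulnA mulnC (_ : (b - fl p - 1).+1 = b - fl p) //; lia.
rewrite (mulnC 'C(n, t)); congr (_ * _); apply: IH; [lia | | lia |]; last first.
  by rewrite (@INR_subn t q); [field; lra | lia].
have : t - q <= (b - fl p - 1) * r by rewrite leq_subLR -ltnS.
move/INR_leq; rewrite mult_INR => ?.
have : (INR (t - q) / INR r * INR r = INR (t - q))%Re by field; lra.
have := pos_INR (t - q); nra.
Qed.

Theorem mainTheorem2 (a b q r : nat) (p : R) :
  (1 <= r)%N ->
  Rle 0 p -> Rle p (INR b) ->
  (q <= a)%N ->
  Rminus (INR a) (INR q) = Rmult (INR r) (Rminus (INR b) p) ->
  (0 < a + b)%N ->
  exists L : seq (seq nat),
    uniq L /\
    (forall c : seq nat, c \in L <-> parking_in_P a b p r c) /\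
    size L = G a b p r q.
Proof.
(* The excluded case a = b = 0 would be harmless: both sides are then 1. *)
move=> r_gt0 p_ge0 pb qa slope _.
exists [seq c <- bounded_seqs a b | parkingb b p r c].
split; first exact/filter_uniq/bounded_seqs_uniq.
split=> [c|]; first by rewrite parking_in_PE.
by rewrite size_filter; apply: count_parkingb_G.
Qed.
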